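(* Let $\rho\in[0,1)$, $\boldsymbol x\in\mathbb R^n\setminus\{\boldsymbol 0\}$ and $\boldsymbol g=\boldsymbol 1_m+\boldsymbol e\in\mathcal G_\rho$. Consider the expected objective $F(\boldsymbol\xi,\boldsymbol\gamma)=\mathbb E f(\boldsymbol\xi,\boldsymbol\gamma)=\frac1{2m}\|\boldsymbol\xi\boldsymbol\gamma^\top-\boldsymbol x\boldsymbol g^\top\|_F^2$ on $\mathbb R^n\times\Pi^m_+$, where $\Pi^m_+=\{\boldsymbol v\in\mathbb R^m_+:\boldsymbol 1_m^\top\boldsymbol v=m\}$. Write $\boldsymbol\gamma=\boldsymbol 1_m+\boldsymbol\varepsilon$ with $\boldsymbol\varepsilon\in\boldsymbol 1_m^\perp$. Then the only point $(\boldsymbol\xi,\boldsymbol\gamma)\in\mathbb R^n\times\Pi^m_+$ at which both $$\tfrac1m\big(\|\boldsymbol\gamma\|^2\boldsymbol\xi-(\boldsymbol\gamma^\top\boldsymbol g)\boldsymbol x\big)=\boldsymbol 0\quad\text{and}\quad \tfrac1m\big(\|\boldsymbol\xi\|^2\boldsymbol\varepsilon-(\boldsymbol\xi^\top\boldsymbol x)\boldsymbol e\big)=\boldsymbol 0$$ (i.e. the expected gradient in $\boldsymbol\xi$ and the expected projected gradient in $\boldsymbol\gamma$ vanish) is $(\boldsymbol\xi,\boldsymbol\gamma)=(\boldsymbol x,\boldsymbol g)$. Moreover, the expected projected Hessian at this point, $$\boldsymbol H=\frac1m\begin{pmatrix}\|\boldsymbol g\|^2\boldsymbol I_n & \boldsymbol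 x\boldsymbol e^\top\\ \boldsymbol e\boldsymbol x^\top & \|\boldsymbol x\|^2\boldsymbol P\end{pmatrix},$$ satisfies $\boldsymbol u^\top\boldsymbol H\boldsymbol u>0$ for every nonzero $\boldsymbol u\in\mathcal V:=\mathbb R^n\times\boldsymbol 1_m^\perp$.
   Context: $\boldsymbol 1_m^\perp=\{\boldsymbol v\in\mathbb R^m:\boldsymbol 1_m^\top\boldsymbol v=0\}$ and $\boldsymbol P=\boldsymbol I_m-\frac1m\boldsymbol 1_m\boldsymbol 1_m^\top$ is the orthogonal projector onto it. For $\rho\in[0,1)$, $\mathcal G_\rho=\{\boldsymbol 1_m+\boldsymbol e:\ \boldsymbol e\in\boldsymbol 1_m^\perp,\ \|\boldsymbol e\|_\infty\le\rho\}$. The objective is $f(\boldsymbol\xi,\boldsymbol\gamma)=\frac1{2mp}\sum_{l=1}^p\|\mathrm{diag}(\boldsymbol\gamma)\boldsymbol A_l\boldsymbol\xi-\mathrm{diag}(\boldsymbol g)\boldsymbol A_l\boldsymbol x\|^2$ where the rows of the matrices $\boldsymbol A_l\in\mathbb R^{m\times n}$ are i.i.d. centred isotropic random vectors ($\mathbb E\boldsymbol a\boldsymbol a^\top=\boldsymbol I_n$); its expectation is the $F$ given in the claim. *)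

(* purely algebraic statement over an arbitrary real field. *)
From HB Require Import structures.
From mathcomp Require Import all_boot all_order all_algebra.
Set Implicit Arguments. Unset Strict Implicit. Unset Printing Implicit Defensive.
Import Order.TTheory GRing.Theory Num.Theory.
Local Open Scope ring_scope.

Section Defs.
Variable R : realFieldType.

Definition ones k : 'cV[R]_k := const_mx 1.

Definition dotv k (u v : 'cV[R]_k) : R := (u^T *m v) 0 0.
Definition sqnorm k (v : 'cV[R]_k) : R := dotv v v.

Definition orth1 k (v : 'cV[R]_k) : Prop := dotv (ones k) v = 0.

Definition Pmx k : 'M[R]_k := 1%:M - (k%:R)^-1 *: (ones k *m (ones k)^T).

Definition inG k (rho : R) (g : 'cV[R]_k) : Prop :=
  orth1 (g - ones k) /\ forall i, `|(g - ones k) i 0| <= rho.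

Definition inPiPlus k (v : 'cV[R]_k) : Prop :=
  (forall i, 0 <= v i 0) /\ dotv (ones k) v = k%:R.

Definition gradXi n m (x : 'cV[R]_n) (g : 'cV[R]_m) xi gam : 'cV[R]_n :=
  (m%:R)^-1 *: (sqnorm gam *: xi - dotv gam g *: x).

Definition gradGam n m (x : 'cV[R]_n) (g : 'cV[R]_m) (xi : 'cV[R]_n) gam : 'cV[R]_m :=
  (m%:R)^-1 *: (sqnorm xi *: (gam - ones m) - dotv xi x *: (g - ones m)).

Definition Hmx n m (x : 'cV[R]_n) (g : 'cV[R]_m) : 'M[R]_(n + m) :=
  (m%:R)^-1 *: block_mx (sqnorm g *: (1%:M : 'M[R]_n)) (x *m (g - ones m)^T)
                        ((g - ones m) *m x^T) (sqnorm x *: Pmx m).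

End Defs.

(* At a critical point the xi-equation forces xi = c x with c = <gam, g> / |gam|^2 > 0,
   and the gamma-equation then gives c eps = e.  On the plane 1^T v = m one has
   <v, w> = m + <v - 1, w - 1>, so <gam, g> = m + c |eps|^2 and |gam|^2 = m + |eps|^2;
   comparing with <gam, g> = c |gam|^2 yields c = 1.  At (x, g), for u2 in 1^perp the
   Hessian form is (m |u1|^2 + |e u1^T + u2 x^T|_F^2) / m, which is positive unless
   u1 = 0, in which case it is |x|^2 |u2|^2 / m. *)
From HB Require Import structures.
From mathcomp Require Import all_boot all_order all_algebra.
From mathcomp Require Import ring lra.
Import Order.TTheory GRing.Theory Num.Theory.
Set Implicit Arguments. Unset Strict Implicit.
Local Open Scope ring_scope.

Section InnerProduct.
Variable R : realFieldType.

Lemma dotvE k (u v : 'cV[R]_k) : dotv u v = \sum_i u i 0 * v i 0.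
Proof. by rewrite /dotv mxE; apply: eq_bigr => i _; rewrite mxE. Qed.

Lemma dotvC k (u v : 'cV[R]_k) : dotv u v = dotv v u.
Proof. by rewrite !dotvE; apply: eq_bigr => i _; rewrite mulrC. Qed.

Lemma dotvDl k (u w v : 'cV[R]_k) : dotv (u + w) v = dotv u v + dotv w v.
Proof. by rewrite !dotvE -big_split; apply: eq_bigr => i _; rewrite mxE mulrDl. Qed.

Lemma dotvBl k (u w v : 'cV[R]_k) : dotv (u - w) v = dotv u v - dotv w v.
Proof. by rewrite !dotvE -sumrB; apply: eq_bigr => i _; rewrite !mxE mulrBl. Qed.

Lemma dotvZl k a (u v : 'cV[R]_k) : dotv (a *: u) v = a * dotv u v.
Proof. by rewrite !dotvE mulr_sumr; apply: eq_bigr => i _; rewrite mxE mulrA. Qed.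

Lemma dotvDr k (u w v : 'cV[R]_k) : dotv v (u + w) = dotv v u + dotv v w.
Proof. by rewrite !(dotvC v) dotvDl. Qed.

Lemma dotvBr k (u w v : 'cV[R]_k) : dotv v (u - w) = dotv v u - dotv v w.
Proof. by rewrite !(dotvC v) dotvBl. Qed.

Lemma dotvZr k a (u v : 'cV[R]_k) : dotv v (a *: u) = a * dotv v u.
Proof. by rewrite !(dotvC v) dotvZl. Qed.

Lemma dotv0l k (v : 'cV[R]_k) : dotv 0 v = 0.
Proof. by rewrite dotvE big1 // => i _; rewrite mxE mul0r. Qed.

Lemma dotv_ones k : dotv (ones R k) (ones R k) = k%:R.
Proof.
rewrite dotvE (eq_bigr (fun _ => 1)) ?sumr_const ?card_ord // => i _.
by rewrite !mxE mulr1.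
Qed.

Lemma sqnorm_ge0 k (v : 'cV[R]_k) : 0 <= sqnorm v.
Proof. by rewrite /sqnorm dotvE; apply: sumr_ge0 => i _; rewrite -expr2 sqr_ge0. Qed.

Lemma sqnorm_gt0 k (v : 'cV[R]_k) : v != 0 -> 0 < sqnorm v.
Proof.
move=> v_nz; rewrite lt_def sqnorm_ge0 andbT; apply: contra v_nz => /eqP v0.
have sq_ge0 i : true -> 0 <= v i 0 * v i 0 by rewrite -expr2 sqr_ge0.
have /psumr_eq0P vv0 : \sum_i v i 0 * v i 0 = 0 by rewrite -dotvE.
apply/eqP/matrixP => i j; rewrite (ord1 j) mxE.
by have /eqP := vv0 sq_ge0 i isT; rewrite mulf_eq0 orbb => /eqP.
Qed.

Lemma dotv_lbound k c (u v : 'cV[R]_k) :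
  (forall i, 0 <= u i 0) -> (forall i, c <= v i 0) -> c * dotv (ones R k) u <= dotv u v.
Proof.
move=> u_ge0 v_ge_c; rewrite !dotvE mulr_sumr; apply: ler_sum => i _.
by rewrite mxE mul1r mulrC ler_wpM2l.
Qed.

Lemma outer_formE p q (u z : 'cV[R]_p) (v w : 'cV[R]_q) :
  (u^T *m (z *m w^T) *m v) 0 0 = dotv u z * dotv w v.
Proof. by rewrite !mulmxA -(mulmxA _ w^T) /dotv mxE big_ord1. Qed.

(* The left-hand side is the squared Frobenius norm of [e a^T + u x^T]. *)
Lemma cross_form_ge0 p q (e u : 'cV[R]_p) (a x : 'cV[R]_q) :
  0 <= sqnorm e * sqnorm a + 2 * (dotv e u * dotv a x) + sqnorm u * sqnorm x.
Proof.
have -> : sqnorm e * sqnorm a + 2 * (dotv e u * dotv a x) + sqnorm u * sqnorm x =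
    \sum_i \sum_j (e i 0 * a j 0 + u i 0 * x j 0) ^+ 2.
  rewrite /sqnorm !dotvE !mulr_suml mulr_sumr -!big_split; apply: eq_bigr => i _.
  rewrite !mulr_sumr -!big_split; apply: eq_bigr => j _ /=; ring.
by apply: sumr_ge0 => i _; apply: sumr_ge0 => j _; apply: sqr_ge0.
Qed.

Lemma dotv_shift_ones k (v w : 'cV[R]_k) :
  orth1 (v - ones R k) -> orth1 (w - ones R k) ->
  dotv v w = k%:R + dotv (v - ones R k) (w - ones R k).
Proof.
have -> : dotv v w = dotv ((v - ones R k) + ones R k) ((w - ones R k) + ones R k).
  by rewrite !subrK.
rewrite /orth1; move: (v - _) (w - _) => v' w' v'_orth w'_orth.
by rewrite dotvDl !dotvDr dotv_ones (dotvC v' (ones R k)) v'_orth w'_orth; lra.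
Qed.

Lemma Pmx_formE k (u : 'cV[R]_k) : orth1 u -> (u^T *m Pmx R k *m u) 0 0 = sqnorm u.
Proof.
move=> u_orth; rewrite /Pmx mulmxBr mulmxBl mulmx1 -scalemxAr -scalemxAl.
rewrite [LHS]mxE [X in _ + X]mxE [X in - X]mxE outer_formE.
by rewrite (dotvC u) u_orth mul0r mulr0 oppr0 addr0.
Qed.

End InnerProduct.

Section Constraints.
Variables (R : realFieldType) (m : nat).
Implicit Types (rho : R) (g gam : 'cV[R]_m).

Lemma inG_lbound rho g : inG rho g -> forall i, 1 - rho <= g i 0.
Proof.
move=> [_ g_near] i; have := g_near i; rewrite ler_norml => /andP[lb _].
by move: lb; rewrite !mxE; lra.
Qed.

Lemma inG_inPiPlus rho g : rho <= 1 -> inG rho g -> inPiPlus g.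
Proof.
move=> rho_le1 gG; split=> [i|]; first by have := inG_lbound gG i; lra.
case: gG => e_orth _; rewrite -[g](subrK (ones R m)) dotvDr dotv_ones.
by rewrite e_orth add0r.
Qed.

Lemma inPiPlus_orth1 gam : inPiPlus gam -> orth1 (gam - ones R m).
Proof. by case=> _ gam_sum; rewrite /orth1 dotvBr gam_sum dotv_ones subrr. Qed.

End Constraints.

Section CriticalPoints.
Variables (R : realFieldType) (n m : nat) (x : 'cV[R]_n) (g : 'cV[R]_m).
Hypothesis m_gt0 : (0 < m)%N.

Let invm_neq0 : (m%:R)^-1 != 0 :> R.
Proof. by rewrite invr_eq0 pnatr_eq0 -lt0n. Qed.

Lemma gradXi_eq0 xi gam : 0 < sqnorm gam -> gradXi x g xi gam = 0 ->
  xi = (dotv gam g / sqnorm gam) *: x.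
Proof.
move=> gam_gt0 /eqP; rewrite scaler_eq0 (negbTE invm_neq0) subr_eq0 => /eqP xi_eq.
by rewrite mulrC -scalerA -xi_eq scalerA mulVf ?scale1r ?gt_eqF.
Qed.

Lemma gradGam_scaled_eq0 c gam : x != 0 -> c != 0 -> gradGam x g (c *: x) gam = 0 ->
  c *: (gam - ones R m) = g - ones R m.
Proof.
move=> x_nz c_nz /eqP; rewrite scaler_eq0 (negbTE invm_neq0) subr_eq0 => /eqP eq_eps.
have cx_nz : c * sqnorm x != 0 by rewrite mulf_eq0 negb_or c_nz gt_eqF ?sqnorm_gt0.
move: eq_eps; rewrite /sqnorm in cx_nz *; rewrite !dotvZl !dotvZr => eq_eps.
apply: (scalerI cx_nz); rewrite scalerA -eq_eps; congr (_ *: _); ring.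
Qed.

Lemma gradients_at_target : gradXi x g x g = 0 /\ gradGam x g x g = 0.
Proof. by rewrite /gradXi /gradGam /sqnorm !subrr !scaler0. Qed.

Lemma critical_point_unique rho xi gam : rho < 1 -> x != 0 -> inG rho g -> inPiPlus gam ->
  gradXi x g xi gam = 0 -> gradGam x g xi gam = 0 -> xi = x /\ gam = g.
Proof.
move=> rho_lt1 x_nz gG gamP gradXi0 gradGam0.
have e_orth : orth1 (g - ones R m) by case: gG.
have eps_orth := inPiPlus_orth1 gamP.
have m_pos : (0 : R) < m%:R by rewrite ltr0n.
have A_eq := dotv_shift_ones eps_orth eps_orth.
have B_eq := dotv_shift_ones eps_orth e_orth.
have A_gt0 : 0 < sqnorm gam.
  by have := sqnorm_ge0 (gam - ones R m); rewrite /sqnorm A_eq; lra.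
have B_gt0 : 0 < dotv gam g.
  have := dotv_lbound gamP.1 (inG_lbound gG); case: gamP => _ ->.
  have : 0 < (1 - rho) * m%:R by apply: mulr_gt0 => //; lra.
  lra.
have xi_eq := gradXi_eq0 A_gt0 gradXi0.
set c := dotv gam g / sqnorm gam in xi_eq.
have cA : c * sqnorm gam = dotv gam g by rewrite divfK ?gt_eqF.
have c_nz : c != 0 by rewrite mulf_eq0 invr_eq0 !gt_eqF.
have eps_eq : c *: (gam - ones R m) = g - ones R m.
  by apply: gradGam_scaled_eq0 => //; rewrite -xi_eq.
have c1 : c = 1.
  move: B_eq; rewrite -eps_eq dotvZr -cA /sqnorm A_eq => B_eq.
  have /eqP : (c - 1) * m%:R = 0 by lra.
  by rewrite mulf_eq0 (gt_eqF m_pos) orbF subr_eq0 => /eqP.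
split; first by rewrite xi_eq c1 scale1r.
by apply: (addIr (- ones R m)); rewrite -eps_eq c1 scale1r.
Qed.

End CriticalPoints.

Section Hessian.
Variables (R : realFieldType) (n m : nat) (x : 'cV[R]_n) (g : 'cV[R]_m).

Lemma Hmx_formE u1 u2 :
  ((col_mx u1 u2)^T *m Hmx x g *m col_mx u1 u2) 0 0 =
  m%:R^-1 * (sqnorm g * sqnorm u1 + 2 * (dotv (g - ones R m) u2 * dotv u1 x)
    + sqnorm x * (u2^T *m Pmx R m *m u2) 0 0).
Proof.
rewrite /Hmx tr_col_mx -scalemxAr -scalemxAl mul_row_block mul_row_col.
have addE (A B : 'M[R]_1) : (A + B) 0 0 = A 0 0 + B 0 0 by rewrite mxE.
have scaleE c (A : 'M[R]_1) : (c *: A) 0 0 = c * A 0 0 by rewrite mxE.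
rewrite scaleE !mulmxDl !addE -!scalemxAr -!scalemxAl !scaleE mulmx1 !outer_formE.
rewrite -mulmxDl outer_formE (dotvC u2) (dotvC x) -[(u1^T *m u1) 0 0]/(sqnorm u1).
by congr (_ * _); ring.
Qed.

Lemma Hmx_form_orth1 u1 u2 : orth1 (g - ones R m) -> orth1 u2 ->
  ((col_mx u1 u2)^T *m Hmx x g *m col_mx u1 u2) 0 0 =
  m%:R^-1 * (m%:R * sqnorm u1 + (sqnorm (g - ones R m) * sqnorm u1
    + 2 * (dotv (g - ones R m) u2 * dotv u1 x) + sqnorm u2 * sqnorm x)).
Proof.
move=> e_orth u2_orth; rewrite Hmx_formE Pmx_formE // /sqnorm.
by rewrite (dotv_shift_ones e_orth e_orth); congr (_ * _); ring.
Qed.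

Lemma Hmx_pos_def u1 u2 : (0 < m)%N -> x != 0 -> orth1 (g - ones R m) -> orth1 u2 ->
  col_mx u1 u2 != 0 -> 0 < ((col_mx u1 u2)^T *m Hmx x g *m col_mx u1 u2) 0 0.
Proof.
move=> m_gt0 x_nz e_orth u2_orth u_nz; rewrite Hmx_form_orth1 //.
have m_pos : (0 : R) < m%:R by rewrite ltr0n.
apply: mulr_gt0; first by rewrite invr_gt0.
have [u1_0 | u1_nz] := eqVneq u1 0; last first.
  have := cross_form_ge0 (g - ones R m) u2 u1 x.
  have : 0 < m%:R * sqnorm u1 by rewrite mulr_gt0 ?sqnorm_gt0.
  lra.
have u2_nz : u2 != 0 by apply: contra u_nz => /eqP u2_0; rewrite u1_0 u2_0 col_mx0.
rewrite u1_0 /sqnorm !dotv0l !(mulr0, mul0r, add0r).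
by apply: mulr_gt0; apply: sqnorm_gt0.
Qed.

End Hessian.

Theorem mainTheorem1 (R : realFieldType) (n m : nat) (rho : R)
    (x : 'cV[R]_n) (g : 'cV[R]_m) :
  (0 < m)%N -> 0 <= rho -> rho < 1 -> x != 0 -> inG rho g ->
  (inPiPlus g /\
   forall (xi : 'cV[R]_n) (gam : 'cV[R]_m), inPiPlus gam ->
     (gradXi x g xi gam = 0 /\ gradGam x g xi gam = 0 <-> xi = x /\ gam = g)) /\
  (forall (u1 : 'cV[R]_n) (u2 : 'cV[R]_m), orth1 u2 -> col_mx u1 u2 != 0 ->
     0 < ((col_mx u1 u2)^T *m Hmx x g *m col_mx u1 u2) 0 0).
Proof.
move=> m_gt0 _ rho_lt1 x_nz gG.
split; [split => [|xi gam gamP]; [|split] | ].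
- exact: inG_inPiPlus (ltW rho_lt1) gG.
- by case; apply: (critical_point_unique m_gt0 rho_lt1 x_nz gG gamP).
- by case=> -> ->; apply: gradients_at_target.
- by move=> u1 u2; apply: Hmx_pos_def => //; case: gG.
Qed.
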